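(* Let $G=(V,E,w)$ be an edge-weighted graph with positive rational weights and no isolated vertices. A set $S\subseteq V$ is a weighted partial positive influence total dominating set (WPPITDS) if and only if $g(S)=g_{\max}$, where $g(A)=h(A)+\frac1L f(A)$ and $g_{\max}=\max_{X\subseteq V}g(X)$.
   Context: $N_A(v)=N(v)\cap A$, $W_A(v)=\sum_{u\in N_A(v)}w_{(v,u)}$, $W(v)=W_V(v)$. $h(A)=\sum_{v\in V}h_A(v)$ with $h_A(v)=W(v)/2$ if $v\in A$ or $W_A(v)\ge W(v)/2$, and $h_A(v)=W_A(v)$ otherwise. $f(A)=\sum_{v\in V}\delta_A(v)$ with $\delta_A(v)=1$ if $|N_A(v)|>0$ and $0$ otherwise. $L=\max_v l(v)$ where $l(v)$ is the lcm of the denominators of the reduced fractions $W(v)/2$ and of the weights of edges incident to $v$. A WPPITDS is a set $S\subseteq V$ such that every $v\in V\setminus S$ satisfies $W_S(v)\ge W(v)/2$ and every vertex of $S$ has at least one neighbor in $S$. *)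

From HB Require Import structures.
From mathcomp Require Import all_boot all_order all_algebra.
Set Implicit Arguments. Unset Strict Implicit. Unset Printing Implicit Defensive.
Import Order.TTheory GRing.Theory Num.Theory.
Local Open Scope ring_scope.

(* Edge-weighted simple graph G = (V, E, w): vertex set a finType V, adjacency
   a symmetric irreflexive relation e, weights w : V -> V -> rat (only values
   on edges matter). *)
Section WPPITDS.
Variables (V : finType) (e : rel V) (w : V -> V -> rat).

Definition NA (A : {set V}) (v : V) : {set V} := [set u in A | e v u].

Definition WA (A : {set V}) (v : V) : rat := \sum_(u in NA A v) w v u.

Definition Wt (v : V) : rat := WA [set: V] v.

Definition hA (A : {set V}) (v : V) : rat :=
  if (v \in A) || (Wt v / 2 <= WA A v) then Wt v / 2 else WA A v.

Definition h (A : {set V}) : rat := \sum_(v : V) hA A v.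

Definition deltaA (A : {set V}) (v : V) : nat := (0 < #|NA A v|)%N.

Definition f (A : {set V}) : nat := (\sum_(v : V) deltaA A v)%N.

Definition lv (v : V) : nat :=
  lcmn `|denq (Wt v / 2)|%N (\big[lcmn/1%N]_(u | e v u) `|denq (w v u)|%N).

Definition L : nat := (\max_(v : V) lv v)%N.

Definition g (A : {set V}) : rat := h A + (L%:R)^-1 * (f A)%:R.

Definition gmax : rat := \big[Num.max/g set0]_(X : {set V}) g X.

Definition is_WPPITDS (S : {set V}) : Prop :=
  (forall v, v \notin S -> Wt v / 2 <= WA S v) /\
  (forall v, v \in S -> exists u, u \in NA S v).

End WPPITDS.

From HB Require Import structures.
From mathcomp Require Import all_boot all_order all_algebra.
Set Implicit Arguments.
Unset Strict Implicit.
Unset Printing Implicit Defensive.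
Import Order.TTheory GRing.Theory Num.Theory.
Local Open Scope ring_scope.

(* g splits into per-vertex terms h_A(v) + delta_A(v)/L, each bounded by
   W(v)/2 + 1/L, with equality exactly when v lies in A or is half-dominated
   by A, and has a neighbour in A.  Without isolated vertices V attains every
   bound, so g_max = g(V), and g(S) = g_max forces equality at every vertex;
   as the weights are positive, that is the WPPITDS condition. *)

Section Characterization.
Variables (V : finType) (e : rel V) (w : V -> V -> rat).

Lemma lv_gt0 v : (0 < lv e w v)%N.
Proof.
rewrite /lv lcmn_gt0 absz_gt0 denq_neq0 /=.
elim/big_ind: _ => [//| a b | u _]; first by rewrite lcmn_gt0 => -> ->.
by rewrite absz_gt0 denq_neq0.
Qed.

Lemma L_gt0 (v : V) : (0 < L e w)%N.
Proof. exact: leq_trans (lv_gt0 v) (leq_bigmax v). Qed.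

Definition gv (A : {set V}) (v : V) : rat :=
  hA e w A v + (L e w)%:R^-1 * (deltaA e A v)%:R.

Lemma g_sum A : g e w A = \sum_(v : V) gv A v.
Proof. by rewrite /g big_split /= -mulr_sumr -natr_sum. Qed.

Lemma hA_leif A v :
  hA e w A v <= Wt e w v / 2 ?= iff (v \in A) || (Wt e w v / 2 <= WA e w A v).
Proof.
apply/leifP; rewrite /hA; case: ifP => [-> // | /negbT C_false].
by rewrite (negbTE C_false) ltNge; case/norP: C_false.
Qed.

Lemma deltaA_leif A v :
  (L e w)%:R^-1 * (deltaA e A v)%:R <= (L e w)%:R^-1
  ?= iff (0 < #|NA e A v|)%N :> rat.
Proof.
apply/leifP; rewrite /deltaA; case: (0 < _)%N => /=; first by rewrite mulr1.
by rewrite mulr0 invr_gt0 ltr0n (L_gt0 v).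
Qed.

Definition dominated_at (A : {set V}) (v : V) : bool :=
  ((v \in A) || (Wt e w v / 2 <= WA e w A v)) && (0 < #|NA e A v|)%N.

Lemma gv_leif A v :
  gv A v <= Wt e w v / 2 + (L e w)%:R^-1 ?= iff dominated_at A v.
Proof. exact: leifD (hA_leif A v) (deltaA_leif A v). Qed.

Hypothesis no_isolated : forall v, exists u, e v u.

Lemma gv_setT v : gv setT v = Wt e w v / 2 + (L e w)%:R^-1.
Proof.
apply/eqP; rewrite (gv_leif setT v) /dominated_at in_setT /=.
have [u evu] := no_isolated v.
by apply/card_gt0P; exists u; rewrite inE in_setT.
Qed.

Lemma g_leif A : g e w A <= g e w setT ?= iff [forall v, dominated_at A v].
Proof.
rewrite !g_sum; under [X in _ <= X ?= iff _]eq_bigr do rewrite gv_setT.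
exact: leif_sum (fun v _ => gv_leif A v).
Qed.

Lemma gmax_setT : gmax e w = g e w setT.
Proof.
apply: le_anti; rewrite le_bigmax andbT.
by apply/bigmax_leP; split=> [|X _]; apply: (g_leif _).1.
Qed.

Hypothesis w_pos : forall u v, e u v -> 0 < w u v.

Lemma Wt_gt0 v : 0 < Wt e w v.
Proof.
have [u evu] := no_isolated v.
rewrite /Wt /WA (bigD1 u) /=; last by rewrite inE in_setT.
apply: ltr_pwDl; first exact: w_pos.
by apply: sumr_ge0 => x /andP [+ _]; rewrite inE => /andP [_ /w_pos/ltW].
Qed.

Lemma is_WPPITDSP S : is_WPPITDS e w S <-> [forall v, dominated_at S v].
Proof.
split=> [[half_dom total] | /forallP dom]; last first.
  split=> v; have /andP [inS_or_half /card_gt0P N_nonempty] := dom v => //.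
  by move=> vNS; case/orP: inS_or_half => // vS; rewrite vS in vNS.
apply/forallP => v; rewrite /dominated_at.
have [vS | vNS] := boolP (v \in S).
  by have [u uN] := total v vS; apply/card_gt0P; exists u.
rewrite half_dom //=; apply/card_gt0P/set0Pn/eqP => N0.
have := half_dom v vNS; rewrite /WA N0 big_set0.
by rewrite leNgt divr_gt0 ?Wt_gt0.
Qed.

End Characterization.

Theorem mainTheorem16 (V : finType) (e : rel V) (w : V -> V -> rat)
  (e_sym : symmetric e) (e_irr : irreflexive e)
  (w_sym : forall u v, w u v = w v u)
  (w_pos : forall u v, e u v -> 0 < w u v)
  (no_isolated : forall v, exists u, e v u)
  (S : {set V}) :
  is_WPPITDS e w S <-> g e w S = gmax e w.
Proof.
rewrite (gmax_setT w no_isolated).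
apply: iff_trans (is_WPPITDSP no_isolated w_pos S) _.
by rewrite -(g_leif w no_isolated S).2; split=> /eqP.
Qed.
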